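(* Let $C$ be a kernel configuration, $\mathbb V$ a $K$-vector space and $\theta:\mathbb V\to\mathbb V$ a $C$-endomorphism which is $C$-image-complete, and let $F\subseteq K[X]_{\mathrm{irr}}^{0<C<\infty}$ be finite. Then: (1) $\mathrm{Im}(\eta)=\mathrm{Im}(F^C)$ for every $\eta\in K[X]$ with $F^C\mid\eta$ and all monic irreducible factors of $\eta$ lying in $K[X]_{\mathrm{irr}}^{C=0}\cup F$; (2) $\mathbb V=\mathrm{Im}(F^C)\oplus\mathrm{Ker}(F^C)=\mathrm{Im}(F^C)\oplus\bigoplus_{f\in F}\mathrm{Ker}(f^{C(f)})$; (3) $\mathrm{Im}(F^C)=\mathrm{Im}(F'^C)\oplus\bigoplus_{f\in F'\setminus F}\mathrm{Ker}(f^{C(f)})$ for every finite $F'$ with $F\subseteq F'\subseteq K[X]_{\mathrm{irr}}^{0<C<\infty}$; (4) $\mathrm{Im}(g^{C(g)})=\mathrm{Im}(F^C)\oplus\bigoplus_{f\in F\setminus\{g\}}\mathrm{Ker}(f^{C(f)})$ for every $g\in F$.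
   Context: $K$ is a field, $K[X]_{\mathrm{irr}}$ the set of monic irreducible polynomials of $K[X]$. For $\rho=\sum_i(\rho)_iX^i$, $\rho[\theta]=\sum_i(\rho)_i\theta^i$; $\mathrm{Ker}(\rho),\mathrm{Im}(\rho)$ are kernel and image of $\rho[\theta]$. A kernel configuration is $C=(c,d)$ with $c:K[X]_{\mathrm{irr}}\to\mathbb N\cup\{\infty\}$, $d\in\mathbb N_{>0}\cup\{\infty\}$, $d=\infty$ or $d=\sum_f\deg(f)c(f)$; $C(f)=c(f)$. $C$ is algebraic if $d<\infty$ (with $\mathrm{MiPo}(C)=\prod_ff^{C(f)}$), transcendental otherwise. $\theta$ is a $C$-endomorphism if $\mathrm{MiPo}(C)[\theta]=0$ (algebraic case), resp. $\mathrm{Ker}(f^{C(f)})=\mathrm{Ker}(f^{C(f)+1})$ for all $f$ with $C(f)<\infty$ (transcendental case). $\theta$ is $C$-image-complete if $\mathrm{Im}(f^{C(f)})=\mathrm{Im}(f^{C(f)+1})$ for all $f\in K[X]_{\mathrm{irr}}$ with $C(f)<\infty$. Notation: $K[X]_{\mathrm{irr}}^{0<C<\infty}=\{f:0<C(f)<\infty\}$, $K[X]_{\mathrm{irr}}^{C=0}=\{f:C(f)=0\}$, and for finite $F\subseteq K[X]_{\mathrm{irr}}^{0<C<\infty}$, $F^C:=\prod_{f\in F}f^{C(f)}$. *)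

From HB Require Import structures.
From mathcomp Require Import all_boot all_order all_algebra.
From mathcomp Require Export finmap.
Set Implicit Arguments. Unset Strict Implicit. Unset Printing Implicit Defensive.
Import Order.TTheory GRing.Theory Num.Theory.
Local Open Scope ring_scope.

Section Defs.
Variables (K : fieldType) (V : lmodType K).

Definition peval (rho : {poly K}) (theta : V -> V) (v : V) : V :=
  \sum_(i < size rho) rho`_i *: iter i theta v.

(* subspaces are represented as predicates on V *)
Definition Ker (rho : {poly K}) (theta : V -> V) : V -> Prop :=
  fun v => peval rho theta v = 0.
Definition Im (rho : {poly K}) (theta : V -> V) : V -> Prop :=
  fun v => exists w, v = peval rho theta w.

Definition irr_monic (f : {poly K}) : Prop := f \is monic /\ irreducible_poly f.

(* kernel configuration C = (c, d); None encodes infinity *)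
Record kconfig := KConfig { kc_c : {poly K} -> option nat; kc_d : option nat }.

(* C(f) as a natural number, meaningful when C(f) < oo *)
Definition Cexp (C : kconfig) (f : {poly K}) : nat := odflt 0%N (kc_c C f).

Definition kc_support (C : kconfig) (s : seq {poly K}) : Prop :=
  uniq s /\ forall f, f \in s <-> (irr_monic f /\ kc_c C f <> Some 0%N).

Definition kconf (C : kconfig) : Prop :=
  match kc_d C with
  | None => True
  | Some n => (0 < n)%N /\ exists s, kc_support C s /\
       (forall f, f \in s -> kc_c C f <> None) /\
       n = (\sum_(f <- s) (size f).-1 * Cexp C f)%N
  end.

Definition MiPo (C : kconfig) (s : seq {poly K}) : {poly K} :=
  \prod_(f <- s) f ^+ Cexp C f.

Definition C_endo (C : kconfig) (theta : V -> V) : Prop :=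
  match kc_d C with
  | Some _ => forall s, kc_support C s -> forall v, peval (MiPo C s) theta v = 0
  | None => forall f n, irr_monic f -> kc_c C f = Some n ->
       forall v, Ker (f ^+ n) theta v <-> Ker (f ^+ n.+1) theta v
  end.

Definition C_image_complete (C : kconfig) (theta : V -> V) : Prop :=
  forall f n, irr_monic f -> kc_c C f = Some n ->
    forall v, Im (f ^+ n) theta v <-> Im (f ^+ n.+1) theta v.

Definition in_pos_fin (C : kconfig) (f : {poly K}) : Prop :=
  irr_monic f /\ exists n, kc_c C f = Some n /\ (0 < n)%N.

Definition FC (C : kconfig) (F : {fset {poly K}}) : {poly K} :=
  \prod_(f <- F) f ^+ Cexp C f.

Definition sumF (T : choiceType) (S : {fset T}) (W : T -> V -> Prop) : V -> Prop :=
  fun v => exists w : T -> V, (forall i, i \in S -> W i (w i)) /\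
                              v = \sum_(i <- S) w i.

Definition indepF (T : choiceType) (S : {fset T}) (W : T -> V -> Prop) : Prop :=
  forall w : T -> V, (forall i, i \in S -> W i (w i)) ->
    \sum_(i <- S) w i = 0 -> forall i, i \in S -> w i = 0.

Definition dsum2 (U A B : V -> Prop) : Prop :=
  (forall v, U v <-> exists a b, A a /\ B b /\ v = a + b) /\
  (forall v, A v -> B v -> v = 0).

Definition dsum_fam (T : choiceType) (U A : V -> Prop) (S : {fset T})
    (W : T -> V -> Prop) : Prop :=
  dsum2 U A (sumF S W) /\ indepF S W.

End Defs.

From HB Require Import structures.
From mathcomp Require Import all_boot all_order all_algebra finmap.
From mathcomp Require Import ring.
From Stdlib Require Import Classical.
Set Implicit Arguments.
Unset Strict Implicit.
Unset Printing Implicit Defensive.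
Import GRing.Theory.
Local Open Scope ring_scope.

(* Everything rests on Bezout identities in K[X]: for coprime p and q,
   Ker (p q) = Ker p (+) Ker q, Im p meets Im q in Im (p q), and Ker q <= Im p.
   For f with 0 < C(f) < oo, the kernel of f^C(f)[theta] does not grow under
   a further power of f (directly when C is transcendental, through MiPo(C)
   when C is algebraic) and neither does its image shrink (image-completeness),
   so Fitting's argument gives V = Im Q (+) Ker Q for Q = f^C(f); this passes
   to coprime products such as F^C, and Ker F^C splits as the direct sum of
   the Ker f^C(f).  Parts (3) and (4) are instances of
   Im P = Im (P Q) (+) Ker Q for coprime P, Q with Q as above.  For (1),
   multiplying F^C by a monic irreducible g with C(g) = 0 or g in F does not
   shrink its image, and eta / F^C is a product of such factors. *)

Lemma iter_linear (K : fieldType) (V : lmodType K) (theta : {linear V -> V}) i :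
  linear (iter i theta).
Proof. by elim: i => [|i IH] a x y //=; rewrite IH linearP. Qed.

Lemma peval_is_linear (K : fieldType) (V : lmodType K) (p : {poly K})
    (theta : {linear V -> V}) : linear (peval p theta).
Proof.
move=> a x y; rewrite /peval scaler_sumr -big_split; apply: eq_bigr => i _ /=.
by rewrite iter_linear scalerDr !scalerA mulrC.
Qed.

HB.instance Definition _ (K : fieldType) (V : lmodType K) (p : {poly K})
    (theta : {linear V -> V}) :=
  GRing.isLinear.Build K V V *:%R (peval p theta) (peval_is_linear p theta).

Section PolyEval.
Variables (K : fieldType) (V : lmodType K) (theta : {linear V -> V}).
Local Notation ev p := (peval p theta).

Lemma peval_widen (p : {poly K}) n v : (size p <= n)%N ->
  ev p v = \sum_(i < n) p`_i *: iter i theta v.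
Proof.
move=> le_p_n; rewrite /peval.
rewrite (big_ord_widen n (fun i => p`_i *: iter i theta v) le_p_n).
rewrite big_mkcond; apply: eq_bigr => i _; case: ltnP => // /(nth_default 0) ->.
by rewrite scale0r.
Qed.

Lemma pevalD (p q : {poly K}) v : ev (p + q) v = ev p v + ev q v.
Proof.
pose n := maxn (size p) (size q).
rewrite (@peval_widen _ n) ?(leq_trans (size_polyD _ _)) //.
rewrite (@peval_widen p n) ?leq_maxl // (@peval_widen q n) ?leq_maxr //.
by rewrite -big_split; apply: eq_bigr => i _; rewrite coefD scalerDl.
Qed.

Lemma pevalZ c (p : {poly K}) v : ev (c *: p) v = c *: ev p v.
Proof.
rewrite (@peval_widen _ (size p)) ?size_scale_leq // /peval scaler_sumr.
by apply: eq_bigr => i _; rewrite coefZ scalerA.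
Qed.

Lemma peval0 v : ev 0 v = 0.
Proof. by rewrite /peval size_poly0 big_ord0. Qed.

Lemma pevalC c v : ev c%:P v = c *: v.
Proof. by rewrite (@peval_widen _ 1) ?size_polyC_leq1 // big_ord1 coefC. Qed.

Lemma peval1 v : ev 1 v = v.
Proof. by rewrite pevalC scale1r. Qed.

Lemma pevalMX (p : {poly K}) v : ev (p * 'X) v = ev p (theta v).
Proof.
rewrite (@peval_widen _ (size p).+1); last first.
  by rewrite (leq_trans (size_polyMleq _ _)) // size_polyX addn2.
rewrite big_ord_recl coefMX eqxx scale0r add0r; apply: eq_bigr => i _.
by rewrite coefMX /= -iterSr.
Qed.

Lemma pevalM (p q : {poly K}) v : ev (p * q) v = ev p (ev q v).
Proof.
elim/poly_ind: q v => [|q c IH] v; first by rewrite mulr0 peval0 linear0.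
rewrite mulrDr mulrA pevalD pevalMX IH mulrC mul_polyC pevalZ.
by rewrite pevalD pevalMX pevalC linearD linearZ.
Qed.

Lemma peval_comm (p q : {poly K}) v : ev p (ev q v) = ev q (ev p v).
Proof. by rewrite -!pevalM mulrC. Qed.

End PolyEval.

Section IrreducibleFactors.
Variable K : fieldType.

Lemma coprimep_prodr (I : eqType) (s : seq I) (p : {poly K}) (q : I -> {poly K}) :
  (forall i, i \in s -> coprimep p (q i)) -> coprimep p (\prod_(i <- s) q i).
Proof.
move=> co; rewrite big_seq; apply: (big_ind (coprimep p)) => //.
- exact: coprimep1.
- by move=> a b pa pb; rewrite coprimepMr pa.
Qed.

Lemma coprime_family_cons (I : eqType) (i : I) (s : seq I) (p : I -> {poly K}) :
  uniq (i :: s) -> {in i :: s &, forall j k, j != k -> coprimep (p j) (p k)} ->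
  coprimep (p i) (\prod_(j <- s) p j) /\
  ({in s &, forall j k, j != k -> coprimep (p j) (p k)}).
Proof.
move=> /andP[i_s _] co; split=> [|j k js ks]; last first.
  by apply: co; rewrite inE ?js ?ks orbT.
apply: coprimep_prodr => j js; apply: co; rewrite ?mem_head ?inE ?js ?orbT //.
by apply: contraNneq i_s => ->.
Qed.

Lemma coprimep_irr_monic (f g : {poly K}) m n :
  irr_monic f -> irr_monic g -> f != g -> coprimep (f ^+ m) (g ^+ n).
Proof.
move=> [mon_f irr_f] [mon_g irr_g] neq_fg.
apply/coprimep_expl/coprimep_expr; rewrite irreducible_poly_coprime //.
apply: contra neq_fg => dvd_fg; rewrite -eqp_monic //.
by apply: irr_g dvd_fg; rewrite neq_ltn irr_f.1 orbT.
Qed.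

Lemma coprimep_irr_monic_family (s : seq {poly K}) (e : {poly K} -> nat) :
  (forall f, f \in s -> irr_monic f) ->
  {in s &, forall f g, f != g -> coprimep (f ^+ e f) (g ^+ e g)}.
Proof. by move=> irr_s f g fs gs; apply: coprimep_irr_monic; apply: irr_s. Qed.

Lemma irr_monic_scale (p : {poly K}) :
  irreducible_poly p -> irr_monic ((lead_coef p)^-1 *: p).
Proof.
move=> irr_p; have lp0 : lead_coef p != 0 by rewrite lead_coef_eq0 irredp_neq0.
split; first by rewrite monicE lead_coefZ mulVf.
split=> [|q q1 dvd_q]; first by rewrite size_scale ?invr_eq0 //; exact: irr_p.1.
apply: eqp_trans (irr_p q q1 _) _; last by rewrite eqp_sym eqp_scale ?invr_eq0.
by rewrite (dvdp_trans dvd_q) // dvdpZl ?invr_eq0.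
Qed.

Lemma exists_irr_monic_dvdp (p : {poly K}) :
  (1 < size p)%N -> exists2 g, irr_monic g & g %| p.
Proof.
elim: {p}(size p).+1 {-2}p (ltnSn (size p)) => // n IH p lt_p_n lt_1p.
have [irr_p | red_p] := classic (irreducible_poly p).
  exists ((lead_coef p)^-1 *: p); first exact: irr_monic_scale.
  by rewrite dvdpZl ?invr_eq0 ?lead_coef_eq0 ?irredp_neq0.
have [q [q1 dvd_qp ndvd_pq]] :
    exists q : {poly K}, [/\ size q != 1%N, q %| p & ~~ (q %= p)].
  apply: NNPP => no_q; apply: red_p; split=> // q q1 dvd_qp.
  by apply: NNPP => ndvd; apply: no_q; exists q; split=> //; apply/negP.
have p0 : p != 0 by rewrite -size_poly_gt0 (ltn_trans _ lt_1p).
have q0 : q != 0 by apply: contra_neq p0 => q0; move: dvd_qp; rewrite q0 dvd0p => /eqP.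
have lt_qp : (size q < size p)%N.
  by rewrite ltn_neqAle dvdp_size_eqp // (negPf ndvd_pq) dvdp_leq.
have [|g irr_g dvd_gq] := IH q (leq_trans lt_qp (ltnSE lt_p_n)).
  by rewrite ltn_neqAle eq_sym q1 size_poly_gt0.
by exists g => //; apply: dvdp_trans dvd_qp.
Qed.

Lemma irr_monic_factor_ind (S : {poly K} -> Prop) :
  (forall c, c != 0 -> S c%:P) -> (forall p q, S p -> S q -> S (p * q)) ->
  forall h, h != 0 -> (forall g, irr_monic g -> g %| h -> S g) -> S h.
Proof.
move=> SC SM h.
elim: {h}(size h).+1 {-2}h (ltnSn (size h)) => // n IH h lt_h_n h0 Sdvd.
have [le_h1 | lt_1h] := leqP (size h) 1.
  rewrite (size1_polyC le_h1); apply: SC.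
  by apply: contra_neq h0 => c0; rewrite (size1_polyC le_h1) c0.
have [g irr_g dvd_gh] := exists_irr_monic_dvdp lt_1h.
have [_ [lt_1g _]] := irr_g.
have g0 : g != 0 by rewrite -size_poly_gt0 ltnW.
have Eh : h = h %/ g * g by rewrite divpK.
have q0 : h %/ g != 0 by apply: contra_neq h0 => q0; rewrite Eh q0 mul0r.
have lt_qh : (size (h %/ g)%R < size h)%N.
  by rewrite size_divp // ltn_subrL -subn1 subn_gt0 lt_1g (ltnW lt_1h).
rewrite Eh; apply: SM; last exact: Sdvd.
apply: IH (leq_trans lt_qh _) q0 _ => // f irr_f dvd_f.
by apply: Sdvd; rewrite // (dvdp_trans dvd_f) ?divp_dvd.
Qed.

End IrreducibleFactors.

Section KernelImage.
Variables (K : fieldType) (V : lmodType K) (theta : {linear V -> V}).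
Local Notation ev p := (peval p theta).
Local Notation KER p := (Ker p theta).
Local Notation IM p := (Im p theta).

Lemma ker_dvdp (p q : {poly K}) x : p %| q -> KER p x -> KER q x.
Proof. by move=> /divpK <- kx; rewrite /Ker pevalM kx linear0. Qed.

Lemma im_dvdp (p q : {poly K}) x : p %| q -> IM q x -> IM p x.
Proof. by move=> /divpK <- [w ->]; exists (ev (q %/ p) w); rewrite mulrC pevalM. Qed.

Lemma im_add (p : {poly K}) x y : IM p x -> IM p y -> IM p (x + y).
Proof. by move=> [a ->] [b ->]; exists (a + b); rewrite linearD. Qed.

Lemma im_sub (p : {poly K}) x y : IM p x -> IM p y -> IM p (x - y).
Proof. by move=> [a ->] [b ->]; exists (a - b); rewrite linearB. Qed.

Lemma im_scale c (q : {poly K}) x : c != 0 -> IM q x -> IM (c%:P * q) x.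
Proof.
move=> c0 [w ->]; exists (c^-1 *: w).
by rewrite pevalM pevalC linearZ scalerA divff // scale1r.
Qed.

Section Bezout.
Variables (p q a b : {poly K}).
Hypothesis bezout : a * p + b * q = 1.

Lemma peval_bezout x : x = ev (a * p) x + ev (b * q) x.
Proof. by rewrite -pevalD bezout peval1. Qed.

Lemma ker_coprime_eq0 x : KER p x -> KER q x -> x = 0.
Proof.
move=> kp kq; rewrite (peval_bezout x) !pevalM.
by rewrite [ev p x]kp [ev q x]kq !linear0 addr0.
Qed.

Lemma ker_coprimeM x : KER (p * q) x -> exists y z, [/\ KER p y, KER q z & x = y + z].
Proof.
move=> kpq; exists (ev (b * q) x), (ev (a * p) x); split.
- by rewrite /Ker -pevalM mulrCA pevalM kpq linear0.
- by rewrite /Ker -pevalM mulrCA pevalM mulrC kpq linear0.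
- by rewrite addrC -peval_bezout.
Qed.

Lemma im_coprimeM x : IM p x -> IM q x -> IM (p * q) x.
Proof.
move=> [y ->] [z Ez]; exists (ev a z + ev b y).
rewrite {1}(peval_bezout (ev p y)) linearD /=; congr (_ + _).
  by rewrite Ez -!pevalM; congr (ev _ z); ring.
by rewrite -!pevalM; congr (ev _ y); ring.
Qed.

Lemma ker_coprime_im x : KER q x -> IM p x.
Proof.
move=> kq; exists (ev a x).
by rewrite {1}(peval_bezout x) [ev (b * q) x]pevalM kq linear0 addr0 -pevalM mulrC.
Qed.

End Bezout.

Lemma coprimep_bezout (p q : {poly K}) :
  coprimep p q -> exists a b : {poly K}, a * p + b * q = 1.
Proof. by move=> /Bezout_eq1_coprimepP [[a b] /= Eab]; exists a, b. Qed.

Definition fitting (Q : {poly K}) : Prop :=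
  (forall x, KER (Q * Q) x -> KER Q x) /\ (forall x, IM Q x -> IM (Q * Q) x).

Lemma fitting_dsum2 Q : fitting Q -> dsum2 (fun _ => True) (IM Q) (KER Q).
Proof.
move=> [kerQ2 imQ2]; split=> [v | v [y ->] kQy]; last first.
  by apply: kerQ2; rewrite /Ker pevalM.
split=> // _; have [y Ey] : IM (Q * Q) (ev Q v) by apply: imQ2; exists v.
exists (ev Q y), (v - ev Q y).
split; [by exists y | split; last by rewrite addrC subrK].
by rewrite /Ker linearB /= Ey pevalM subrr.
Qed.

Lemma fittingM (p q : {poly K}) :
  coprimep p q -> fitting p -> fitting q -> fitting (p * q).
Proof.
move=> co [kp ip] [kq iq]; split=> x.
- rewrite /Ker => kx.
  have kpp : KER (p * p) (ev (q * q) x) by rewrite /Ker -pevalM -kx mulrACA.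
  have kqq : KER (q * q) (ev p x) by rewrite /Ker peval_comm; apply: kp.
  by rewrite pevalM peval_comm; apply: kq.
- have [a [b Eab]] := coprimep_bezout (coprimep_expl 2 (coprimep_expr 2 co)).
  rewrite mulrACA -!expr2 => ix; apply: (im_coprimeM Eab).
    by rewrite expr2; apply/ip/(im_dvdp _ ix)/dvdp_mulr.
  by rewrite expr2; apply/iq/(im_dvdp _ ix)/dvdp_mull.
Qed.

Lemma fitting_prod (I : eqType) (s : seq I) (p : I -> {poly K}) :
  uniq s -> {in s &, forall i j, i != j -> coprimep (p i) (p j)} ->
  (forall i, i \in s -> fitting (p i)) -> fitting (\prod_(i <- s) p i).
Proof.
elim: s => [|i s IH] uniq_s co fit; first by rewrite big_nil /fitting mulr1.
have [co_i co_s] := coprime_family_cons uniq_s co.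
move: uniq_s => /andP[_ uniq_s]; rewrite big_cons.
apply: fittingM co_i _ (IH uniq_s co_s _) => [|j js]; apply: fit.
  exact: mem_head.
by rewrite inE js orbT.
Qed.

Lemma fitting_exp (p : {poly K}) n :
  (forall x, KER (p ^+ n.+1) x -> KER (p ^+ n) x) ->
  (forall x, IM (p ^+ n) x -> IM (p ^+ n.+1) x) -> fitting (p ^+ n).
Proof.
move=> kerS imS.
have kerD k x : KER (p ^+ (n + k)) x -> KER (p ^+ n) x.
  elim: k x => [|k IH] x; rewrite ?addn0 // => kx; apply: IH.
  rewrite /Ker exprD pevalM; apply: kerS.
  by rewrite /Ker -pevalM -exprD addSn -addnS.
have imD k x : IM (p ^+ n) x -> IM (p ^+ (n + k)) x.
  elim: k x => [|k IH] x; rewrite ?addn0 // => /IH [y ->].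
  have [z Ez] := imS _ (ex_intro _ y erefl); exists z.
  by rewrite addnC exprD pevalM Ez -pevalM -exprD !addnS addnC.
by split=> x; rewrite -exprD; [apply: kerD | apply: imD].
Qed.

Lemma im_absorbM (Q p q : {poly K}) :
  (forall x, IM Q x -> IM (p * Q) x) -> (forall x, IM Q x -> IM (q * Q) x) ->
  forall x, IM Q x -> IM (p * q * Q) x.
Proof.
move=> absorb_p absorb_q x /absorb_q [y ->].
have [z Ez] := absorb_p _ (ex_intro _ y erefl); exists z.
by rewrite pevalM Ez -!pevalM mulrCA mulrA.
Qed.

Lemma im_absorb_irr_monic (Q h : {poly K}) : h != 0 ->
  (forall g, irr_monic g -> g %| h -> forall x, IM Q x -> IM (g * Q) x) ->
  forall x, IM Q x -> IM (h * Q) x.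
Proof.
apply: (irr_monic_factor_ind (S := fun h => forall x, IM Q x -> IM (h * Q) x)).
  by move=> c c0 x; apply: im_scale.
by move=> p q; apply: im_absorbM.
Qed.

Lemma dsum2_im_coprime (p q : {poly K}) :
  coprimep p q -> fitting q -> dsum2 (IM p) (IM (p * q)) (KER q).
Proof.
move=> co fit_q; have [a [b Eab]] := coprimep_bezout co.
have [IMq_KERq IMq_KERq_eq0] := fitting_dsum2 fit_q.
split=> [x | x ipq kq]; last first.
  by apply: IMq_KERq_eq0 kq; apply: im_dvdp ipq; apply: dvdp_mull.
split=> [ix | [y [z [ipq [kq ->]]]]].
  have [y [z [iq [kq Ex]]]] := (IMq_KERq x).1 I.
  have ip_z : IM p z := ker_coprime_im Eab kq.
  have ip_y : IM p y by rewrite -[y](addrK z) -Ex; apply: im_sub.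
  by exists y, z; split; first exact: (im_coprimeM Eab ip_y iq).
apply: im_add (ker_coprime_im Eab kq).
by apply: im_dvdp ipq; apply: dvdp_mulr.
Qed.

Lemma ker_sum_prod (I : eqType) (s : seq I) (p : I -> {poly K}) (w : I -> V) :
  (forall i, i \in s -> KER (p i) (w i)) ->
  KER (\prod_(i <- s) p i) (\sum_(i <- s) w i).
Proof.
move=> kw; rewrite /Ker linear_sum big1_seq // => i /= i_s.
by apply: ker_dvdp (kw i i_s); rewrite (big_rem i i_s) dvdp_mulIl.
Qed.

Lemma ker_prod_sum (I : eqType) (s : seq I) (p : I -> {poly K}) :
  uniq s -> {in s &, forall i j, i != j -> coprimep (p i) (p j)} ->
  forall x, KER (\prod_(i <- s) p i) x ->
  exists w : I -> V, (forall i, i \in s -> KER (p i) (w i)) /\ x = \sum_(i <- s) w i.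
Proof.
elim: s => [|i s IH] uniq_s co x.
  by rewrite big_nil /Ker peval1 => ->; exists (fun=> 0); rewrite big_nil.
have [co_i co_s] := coprime_family_cons uniq_s co.
have [a [b Eab]] := coprimep_bezout co_i; move: uniq_s => /andP[i_s uniq_s].
rewrite big_cons => /(ker_coprimeM Eab) [y [z [ky kz ->]]].
have [w [kw ->]] := IH uniq_s co_s z kz.
exists (fun j => if j == i then y else w j); split.
  by move=> j; rewrite inE; case: eqP => [-> | _] //= /kw.
rewrite big_cons eqxx; congr (_ + _); apply: eq_big_seq => j js.
by case: eqP js => // ->; rewrite (negPf i_s).
Qed.

Lemma ker_prod_indep (I : eqType) (s : seq I) (p : I -> {poly K}) :
  uniq s -> {in s &, forall i j, i != j -> coprimep (p i) (p j)} ->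
  forall w : I -> V, (forall i, i \in s -> KER (p i) (w i)) ->
  \sum_(i <- s) w i = 0 -> forall i, i \in s -> w i = 0.
Proof.
elim: s => [|i s IH] uniq_s co w kw //.
have [co_i co_s] := coprime_family_cons uniq_s co.
have [a [b Eab]] := coprimep_bezout co_i; move: uniq_s => /andP[i_s uniq_s].
have kw_s j : j \in s -> KER (p j) (w j) by move=> js; apply: kw; rewrite inE js orbT.
rewrite big_cons => sum0.
have wi0 : w i = 0.
  apply: (ker_coprime_eq0 Eab); first by apply: kw; rewrite mem_head.
  have -> : w i = - \sum_(j <- s) w j by apply/eqP; rewrite -addr_eq0 sum0.
  by rewrite /Ker linearN /= (ker_sum_prod kw_s) oppr0.
move: sum0; rewrite wi0 add0r => sum0 j; rewrite inE => /predU1P [-> // | js].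
exact: IH uniq_s co_s w kw_s sum0 j js.
Qed.

Lemma dsum2_eqr (U A B B' : V -> Prop) :
  (forall v, B v <-> B' v) -> dsum2 U A B -> dsum2 U A B'.
Proof.
move=> eqB [sumUAB capAB]; split=> [v | v av /eqB]; last exact: capAB.
rewrite sumUAB; split=> -[a [b [av [bv ->]]]]; exists a, b; do 2!split=> //; exact/eqB.
Qed.

Lemma dsum_fam_ker_prod (I : choiceType) (U A : V -> Prop) (S : {fset I})
    (p : I -> {poly K}) :
  {in S &, forall i j, i != j -> coprimep (p i) (p j)} ->
  dsum2 U A (KER (\prod_(i <- S) p i)) -> dsum_fam U A S (fun i => KER (p i)).
Proof.
move=> co dsumUAK; split; last exact: ker_prod_indep (fset_uniq S) co.
apply: dsum2_eqr dsumUAK => v; split; first exact: ker_prod_sum (fset_uniq S) co v.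
by move=> [w [kw ->]]; apply: ker_sum_prod.
Qed.

End KernelImage.

Local Open Scope fset_scope.

Section ConfigurationPolynomials.
Variables (K : fieldType) (C : kconfig K).

Lemma in_pos_fin_Cexp f : in_pos_fin C f -> kc_c C f = Some (Cexp C f).
Proof. by move=> [_ [n [Cf _]]]; rewrite /Cexp Cf. Qed.

Lemma FC_fsetD1 (F : {fset {poly K}}) g :
  g \in F -> FC C F = g ^+ Cexp C g * FC C (F `\ g).
Proof. exact: big_fsetD1. Qed.

Lemma FC_fsetD (F F' : {fset {poly K}}) :
  F `<=` F' -> FC C F' = FC C F * FC C (F' `\` F).
Proof.
move=> subFF'; rewrite /FC (big_fsetID _ (fun f => f \in F)) /=.
congr (_ * _); apply: eq_fbigl => f.
  rewrite !inE /=; apply/andP/idP => [[] // | fF]; split=> //; exact: (fsubsetP subFF').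
by rewrite !inE /= andbC.
Qed.

Lemma coprimep_X_FC (F : {fset {poly K}}) g n :
  (forall f, f \in F -> irr_monic f) -> irr_monic g -> g \notin F ->
  coprimep (g ^+ n) (FC C F).
Proof.
move=> irrF irr_g gNF; apply: coprimep_prodr => f fF.
by apply: coprimep_irr_monic; [| exact: irrF | apply: contraNneq gNF => ->].
Qed.

Lemma coprimep_FC (F G : {fset {poly K}}) :
  (forall f, f \in F -> irr_monic f) -> (forall g, g \in G -> irr_monic g) ->
  (forall g, g \in G -> g \notin F) -> coprimep (FC C F) (FC C G).
Proof.
move=> irrF irrG disj; apply: coprimep_prodr => g gG; rewrite coprimep_sym.
by apply: coprimep_X_FC; [exact: irrF | exact: irrG | exact: disj].
Qed.

Lemma MiPo_split s f n : kc_support C s -> irr_monic f -> kc_c C f = Some n ->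
  exists2 R, MiPo C s = f ^+ n * R & coprimep f R.
Proof.
move=> [uniq_s supp] irr_f Cf.
have coprime_f g : irr_monic g -> f != g -> coprimep f (g ^+ Cexp C g).
  by move=> irr_g neq_fg; rewrite -[f]expr1; apply: coprimep_irr_monic.
have [fs | fNs] := boolP (f \in s).
  exists (\prod_(g <- rem f s) g ^+ Cexp C g).
    by rewrite /MiPo (big_rem f fs) /Cexp Cf.
  apply: coprimep_prodr => g; rewrite mem_rem_uniq // => /andP[neq_gf gs].
  by apply: coprime_f; [apply supp | rewrite eq_sym].
have n0 : n = 0%N.
  apply/eqP; apply: contraNT fNs => nz; apply/supp; split=> //.
  by rewrite Cf => -[n_eq0]; rewrite n_eq0 eqxx in nz.
exists (MiPo C s); first by rewrite n0 mul1r.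
apply: coprimep_prodr => g gs; apply: coprime_f; first by apply supp.
by apply: contraNneq fNs => ->.
Qed.

End ConfigurationPolynomials.

Section Configuration.
Variables (K : fieldType) (V : lmodType K) (theta : {linear V -> V}) (C : kconfig K).
Hypotheses (kconf_C : kconf C) (endo : C_endo C theta)
  (im_complete : C_image_complete C theta).
Local Notation ev p := (peval p theta).
Local Notation KER p := (Ker p theta).
Local Notation IM p := (Im p theta).

Lemma C_ker_expS f n : irr_monic f -> kc_c C f = Some n ->
  forall x, KER (f ^+ n.+1) x -> KER (f ^+ n) x.
Proof.
move=> irr_f Cf x kx; move: kconf_C endo; rewrite /kconf /C_endo.
case: (kc_d C) => [d [_ [s [supp _]]] MiPo0 | _ ker_eq]; last first.
  exact/(ker_eq f n irr_f Cf).
(* f^n x is killed by f and by the cofactor R of f^n in MiPo(C). *)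
have [R EM coR] := MiPo_split supp irr_f Cf.
have [a [b Eab]] := coprimep_bezout coR.
apply: (ker_coprime_eq0 (theta := theta) Eab); first by rewrite /Ker -pevalM -exprS.
by rewrite /Ker -pevalM mulrC -EM; apply: MiPo0.
Qed.

Lemma fitting_FC (F : {fset {poly K}}) :
  (forall f, f \in F -> in_pos_fin C f) -> fitting theta (FC C F).
Proof.
move=> posF; apply: fitting_prod (fset_uniq F) _ _ => [|f /posF posf].
  by apply: coprimep_irr_monic_family => f /posF [].
have [irr_f _] := posf; have Cf := in_pos_fin_Cexp posf.
apply: fitting_exp; first exact: C_ker_expS.
by move=> x /(im_complete irr_f Cf).
Qed.

Lemma im_FC_absorb (F : {fset {poly K}}) g :
  (forall f, f \in F -> in_pos_fin C f) -> irr_monic g ->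
  kc_c C g = Some 0%N \/ g \in F -> forall x, IM (FC C F) x -> IM (g * FC C F) x.
Proof.
move=> posF irr_g [Cg | gF] x.
  (* [C g = 0]: image-completeness says that g[theta] is onto. *)
  move=> [w ->]; have [z ->] : IM (g ^+ 1) w.
    by apply/(im_complete irr_g Cg); exists w; rewrite peval1.
  by exists z; rewrite -pevalM mulrC expr1.
have Cg := in_pos_fin_Cexp (posF g gF).
have irr_Dg f : f \in F `\ g -> irr_monic f by rewrite in_fsetD1 => /andP[_ /posF []].
have [a [b Eab]] :=
  coprimep_bezout (coprimep_X_FC C (Cexp C g).+1 irr_Dg irr_g (negbT (fsetD11 g F))).
rewrite (FC_fsetD1 C gF) mulrA -exprS => iFC; apply: (im_coprimeM Eab).
  by apply/(im_complete irr_g Cg); apply: im_dvdp iFC; apply: dvdp_mulr.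
by apply: im_dvdp iFC; apply: dvdp_mull.
Qed.

Lemma im_FC_dvdp (F : {fset {poly K}}) eta :
  (forall f, f \in F -> in_pos_fin C f) -> eta != 0 -> FC C F %| eta ->
  (forall g, irr_monic g -> g %| eta -> kc_c C g = Some 0%N \/ g \in F) ->
  forall v, IM eta v <-> IM (FC C F) v.
Proof.
move=> posF eta0 /dvdpP [h Eeta] factors v.
split; first by apply: im_dvdp; rewrite Eeta dvdp_mull.
have h0 : h != 0 by apply: contra_neq eta0; rewrite Eeta => ->; rewrite mul0r.
rewrite Eeta; apply: (im_absorb_irr_monic h0) => g irr_g dvd_gh.
apply: (im_FC_absorb posF irr_g); apply: (factors g irr_g).
by rewrite Eeta dvdp_mulr.
Qed.

End Configuration.

Theorem lemma3p13 (K : fieldType) (V : lmodType K) (C : kconfig K)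
    (theta : {linear V -> V}) (F : {fset {poly K}}) :
  kconf C -> C_endo C theta -> C_image_complete C theta ->
  (forall f, f \in F -> in_pos_fin C f) ->
  (* (1) *)
  (forall eta : {poly K}, eta != 0 -> FC C F %| eta ->
     (forall g, irr_monic g -> g %| eta -> kc_c C g = Some 0%N \/ g \in F) ->
     forall v, Im eta theta v <-> Im (FC C F) theta v) /\
  (* (2) *)
  dsum2 (fun _ => True) (Im (FC C F) theta) (Ker (FC C F) theta) /\
  dsum_fam (fun _ => True) (Im (FC C F) theta) F
    (fun f => Ker (f ^+ Cexp C f) theta) /\
  (* (3) *)
  (forall F' : {fset {poly K}}, F `<=` F' -> (forall f, f \in F' -> in_pos_fin C f) ->
     dsum_fam (Im (FC C F) theta) (Im (FC C F') theta) (F' `\` F)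
       (fun f => Ker (f ^+ Cexp C f) theta)) /\
  (* (4) *)
  (forall g, g \in F ->
     dsum_fam (Im (g ^+ Cexp C g) theta) (Im (FC C F) theta) (F `\ g)
       (fun f => Ker (f ^+ Cexp C f) theta)).
Proof.
move=> kconf_C endo im_complete posF.
have irr_pos (S : {fset {poly K}}) :
  (forall f, f \in S -> in_pos_fin C f) -> forall f, f \in S -> irr_monic f.
  by move=> posS f /posS [].
have fitting_C := fitting_FC kconf_C endo im_complete.
have dsum_ker (S : {fset {poly K}}) (U A : V -> Prop) :
    (forall f, f \in S -> in_pos_fin C f) -> dsum2 U A (Ker (FC C S) theta) ->
    dsum_fam U A S (fun f => Ker (f ^+ Cexp C f) theta).
  move=> posS; apply: dsum_fam_ker_prod.
  exact: coprimep_irr_monic_family (irr_pos _ posS).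
have dsum_F := fitting_dsum2 (fitting_C _ posF).
split; first by move=> eta; apply: im_FC_dvdp.
split; first exact: dsum_F.
split; first exact: dsum_ker posF dsum_F.
split=> [F' subFF' posF' | g gF].
  have posD f : f \in F' `\` F -> in_pos_fin C f.
    by rewrite in_fsetD => /andP[_ /posF'].
  rewrite (FC_fsetD C subFF'); apply: (dsum_ker _ _ _ posD).
  apply: (dsum2_im_coprime _ (fitting_C _ posD)).
  apply: (coprimep_FC C (irr_pos _ posF) (irr_pos _ posD)) => f.
  by rewrite in_fsetD => /andP[].
have posD f : f \in F `\ g -> in_pos_fin C f by rewrite in_fsetD1 => /andP[_ /posF].
rewrite (FC_fsetD1 C gF); apply: (dsum_ker _ _ _ posD).
apply: (dsum2_im_coprime _ (fitting_C _ posD)).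
exact: (coprimep_X_FC C _ (irr_pos _ posD) (irr_pos _ posF g gF) (negbT (fsetD11 g F))).
Qed.
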